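(* Let $\mathcal{X}=\mathcal{X}_1\times\cdots\times\mathcal{X}_n$ and $\mathcal{Y}=\mathcal{Y}_1\times\cdots\times\mathcal{Y}_m$ be finite sets. If $$1+\sum_{j\in[m]}(|\mathcal{Y}_j|-1)\;\geq\;|\mathcal{X}|\Big/\max_{i\in[n]}|\mathcal{X}_i|,$$ then $\operatorname{RBM}_{\mathcal{X},\mathcal{Y}}$ is a universal approximator, i.e., every probability distribution on $\mathcal{X}$ can be approximated arbitrarily well by distributions from $\operatorname{RBM}_{\mathcal{X},\mathcal{Y}}$.
   Context: For a finite product set $\mathcal{Z}=\mathcal{Z}_1\times\cdots\times\mathcal{Z}_k$, fix in each $\mathcal{Z}_i$ a reference state $z_i^0$ and let $F^{\mathcal{Z}}(z)=\big(1,(\mathbb{1}[z_i=a])_{i\in[k],\,a\in\mathcal{Z}_i\setminus\{z_i^0\}}\big)^\top$ be the sufficient statistics of the independence model on $\mathcal{Z}$. The restricted Boltzmann machine model $\operatorname{RBM}_{\mathcal{X},\mathcal{Y}}$ is the set of probability distributions on $\mathcal{X}$ of the form $p(x)=\frac{1}{Z(\Theta)}\sum_{y\in\mathcal{Y}}\exp\big(F^{\mathcal{X}}(x)^\top\Theta F^{\mathcal{Y}}(y)\big)$, $x\in\mathcal{X}$, for all real matrices $\Theta$ of the appropriate size, with $Z(\Theta)$ the normalizing constant. ''Approximated arbitrarily well'' means lying in the topological closure of the model within the probability simplex on $\mathcal{X}$. *)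

From HB Require Import structures.
From mathcomp Require Import all_boot all_order all_algebra.
From mathcomp Require Import reals.
From mathcomp Require Import sequences exp.
Set Implicit Arguments. Unset Strict Implicit. Unset Printing Implicit Defensive.
Import Order.TTheory GRing.Theory Num.Theory.
Local Open Scope ring_scope.

Definition state (k : nat) (d : 'I_k -> nat) : finType :=
  {dffun forall i : 'I_k, 'I_(d i)}.

(* Index set of the sufficient statistics F^Z: the constant coordinate [None]
   and one coordinate (i, a) for each i and each non-reference state a of Z_i. *)
Definition feat_idx (k : nat) (d : 'I_k -> nat) (z0 : forall i, 'I_(d i))
  : finType :=
  option {ia : {i : 'I_k & 'I_(d i)} | tagged ia != z0 (tag ia)}.

Definition suff_stat (R : realType) (k : nat) (d : 'I_k -> nat)
  (z0 : forall i, 'I_(d i)) (z : state d) (c : feat_idx z0) : R :=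
  match c with
  | None => 1
  | Some ia => if z (tag (val ia)) == tagged (val ia) then 1 else 0
  end.

Definition rbm_weight (R : realType) (n m : nat) (dX : 'I_n -> nat)
  (dY : 'I_m -> nat) (x0 : forall i, 'I_(dX i)) (y0 : forall j, 'I_(dY j))
  (Theta : feat_idx x0 -> feat_idx y0 -> R) (x : state dX) : R :=
  \sum_(y : state dY)
     expR (\sum_(a : feat_idx x0) \sum_(b : feat_idx y0)
             suff_stat R x a * Theta a b * suff_stat R y b).

Definition rbm (R : realType) (n m : nat) (dX : 'I_n -> nat)
  (dY : 'I_m -> nat) (x0 : forall i, 'I_(dX i)) (y0 : forall j, 'I_(dY j))
  (Theta : feat_idx x0 -> feat_idx y0 -> R) (x : state dX) : R :=
  rbm_weight Theta x / \sum_(x' : state dX) rbm_weight Theta x'.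

Definition is_distribution (R : realType) (T : finType) (p : T -> R) : Prop :=
  (forall x, 0 <= p x) /\ \sum_(x : T) p x = 1.

From HB Require Import structures.
From mathcomp Require Import all_boot all_order all_algebra.
From mathcomp Require Import reals.
From mathcomp Require Import sequences exp.
From mathcomp Require Import ring lra.
Import Order.TTheory GRing.Theory Num.Theory.
Local Open Scope ring_scope.
Set Implicit Arguments. Unset Strict Implicit. Unset Printing Implicit Defensive.

(* Pick a visible coordinate [ist] of maximal size and call the sets of states
   that differ only in coordinate [ist] slices; there are |X| / |X_ist| of them.
   By hypothesis there are at least as many hidden non-reference states
   (j, b), the hidden "units", as slices other than the reference one, so
   each of these slices gets a unit of its own.  The energy
   F^X(x)^T Theta F^Y(y) is the sum, over the units active in y, of additively
   separable functions of x, and Theta can be chosen so that for every x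
   exactly one y has energy ln q(x), while all the other ones have energy at
   most 5 B0 - T, where B0 bounds |ln q| and T >= 2 B0 is arbitrary.
   Letting T grow, the RBM approximates every strictly positive q, and mixing
   p with the uniform distribution yields such q arbitrarily close to p. *)

Section ProductStates.
Variables (k : nat) (d : 'I_k -> nat) (z0 : forall i, 'I_(d i)).

Definition nonref_state : finType :=
  {ia : {i : 'I_k & 'I_(d i)} | tagged ia != z0 (tag ia)}.

Definition ref_state : state d := [ffun i => z0 i].

Definition active (z : state d) (u : nonref_state) : bool :=
  z (tag (val u)) == tagged (val u).

Definition unit_state (u : nonref_state) : state d :=
  [ffun i => if i == tag (val u) then insubd (z0 i) (val (tagged (val u)))
             else z0 i].

Lemma card_nonref_state : #|nonref_state| = (\sum_i (d i - 1))%N.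
Proof.
rewrite card_sig -sum1_card.
rewrite -[LHS](sig_big_dep xpredT (fun i b => b != z0 i) (fun _ _ => 1%N)) /=.
apply: eq_bigr => i _; rewrite sum1_card subn1.
by have := cardC1 (z0 i); rewrite card_ord => <-; apply: eq_card => b; rewrite !inE.
Qed.

Lemma active_ref_state u : active ref_state u = false.
Proof. by rewrite /active ffunE; apply/negbTE; rewrite eq_sym (valP u). Qed.

Lemma active_unit_state u v : active (unit_state u) v = (v == u).
Proof.
case: u v => [[i a] ha] [[j b] hb]; rewrite /active /unit_state ffunE /=.
have [eji|nji] := eqVneq j i.
  subst j; have -> : insubd (z0 i) (val a) = a.
    by apply: val_inj; rewrite val_insubd ltn_ord.
  apply/eqP/eqP => e; first by subst b; exact: val_inj.
  by move: e => /(congr1 (fun w : nonref_state => val (tagged (val w)))) /= /val_inj.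
rewrite eq_sym (negbTE hb); apply/esym/negbTE; apply: contra nji => /eqP.
by move=> /(congr1 (fun w : nonref_state => tag (val w))) /= ->.
Qed.

Definition nonref_at (z : state d) (i : 'I_k) (hi : z i != z0 i) : nonref_state :=
  Sub (Tagged (fun i => 'I_(d i)) (z i)) hi.

Lemma active_nonref_at z i hi : active z (@nonref_at z i hi).
Proof. exact: eqxx. Qed.

Lemma neq_ffun_exists (z z' : state d) : z != z' -> exists i, z i != z' i.
Proof.
move=> hne; apply/existsP; apply: contraR hne => /existsPn h.
by apply/eqP/ffunP => i; apply/eqP; rewrite -[_ == _]negbK h.
Qed.

Lemma exists_active z : z != ref_state -> exists u, active z u.
Proof.
move=> /neq_ffun_exists [i]; rewrite ffunE => hi.
by exists (nonref_at hi); exact: active_nonref_at.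
Qed.

Lemma exists_active_neq z u : z != ref_state -> z != unit_state u ->
  exists2 v, active z v & v != u.
Proof.
move=> /neq_ffun_exists [i]; rewrite ffunE => hi.
have [eu|ne] := eqVneq (nonref_at hi) u; last first.
  by exists (nonref_at hi); first exact: active_nonref_at.
move=> /neq_ffun_exists [j]; subst u; rewrite ffunE /=.
have [->|nji] := eqVneq j i.
  rewrite (_ : insubd _ _ = z i) ?eqxx //.
  by apply: val_inj; rewrite val_insubd ltn_ord.
move=> hj; exists (nonref_at hj); first exact: active_nonref_at.
apply: contra nji.
by move=> /eqP /(congr1 (fun w : nonref_state => tag (val w))) /= ->.
Qed.

End ProductStates.

Section SeparableFeatures.
Variables (R : realType) (k : nat) (d : 'I_k -> nat) (z0 : forall i, 'I_(d i)).

Definition sep_coef (g : forall i, 'I_(d i) -> R) (c : feat_idx z0) : R :=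
  match c with
  | None => \sum_i g i (z0 i)
  | Some u => g (tag (val u)) (tagged (val u)) - g (tag (val u)) (z0 (tag (val u)))
  end.

Lemma big_feat_idx (F : feat_idx z0 -> R) :
  \sum_c F c = F None + \sum_(u : nonref_state z0) F (Some u).
Proof.
rewrite (bigD1 None) //=; congr (_ + _).
rewrite (reindex_omap Some id) /=; last by case.
by apply: eq_bigl => u; rewrite eqxx.
Qed.

Lemma sum_suff_stat_sep_coef g (z : state d) :
  \sum_c suff_stat R z c * sep_coef g c = \sum_i g i (z i).
Proof.
pose F (u : {i : 'I_k & 'I_(d i)}) : R := (if z (tag u) == tagged u then 1 else 0) *
  (g (tag u) (tagged u) - g (tag u) (z0 (tag u))).
have F_ref (u : {i : 'I_k & 'I_(d i)}) : ~~ (tagged u != z0 (tag u)) -> F u = 0.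
  by rewrite negbK /F => /eqP ->; rewrite subrr mulr0.
rewrite big_feat_idx /= mul1r.
have -> : \sum_(u : nonref_state z0) suff_stat R z (Some u) * sep_coef g (Some u)
    = \sum_u F u.
  rewrite -(big_rmcond _ _ F_ref).
  by rewrite (big_sub [pred u : {i : 'I_k & 'I_(d i)} | tagged u != z0 (tag u)]).
pose G i (a : 'I_(d i)) : R := (if z i == a then 1 else 0) * (g i a - g i (z0 i)).
rewrite (_ : \sum_u F u = \sum_i \sum_a G i a); last first.
  by rewrite (sig_big_dep xpredT (fun _ _ => true) G); apply: eq_bigr.
rewrite [X in _ + X](eq_bigr (fun i => g i (z i) - g i (z0 i))).
  by rewrite sumrB addrCA subrr addr0.
move=> i _; rewrite (bigD1 (z i)) //= /G eqxx mul1r big1 ?addr0 // => a.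
by rewrite eq_sym => /negbTE ->; rewrite mul0r.
Qed.
End SeparableFeatures.

Section SeparableEnergy.
Variables (R : realType) (n m : nat) (dX : 'I_n -> nat) (dY : 'I_m -> nat).
Variables (x0 : forall i, 'I_(dX i)) (y0 : forall j, 'I_(dY j)).
Implicit Type G : feat_idx y0 -> forall i, 'I_(dX i) -> R.

Definition sep_theta G (a : feat_idx x0) (b : feat_idx y0) : R := sep_coef (G b) a.

Definition col_energy G (b : feat_idx y0) (x : state dX) : R := \sum_i G b i (x i).

Definition sep_energy G (x : state dX) (y : state dY) : R :=
  col_energy G None x + \sum_(u | active y u) col_energy G (Some u) x.

Lemma rbm_weight_sep_theta G x :
  rbm_weight (sep_theta G) x = \sum_y expR (sep_energy G x y).
Proof.
apply: eq_bigr => y _; congr expR; rewrite exchange_big /=.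
rewrite (eq_bigr (fun b => col_energy G b x * suff_stat R y b)); last first.
  by move=> b _; rewrite -mulr_suml sum_suff_stat_sep_coef.
rewrite big_feat_idx /= mulr1 /sep_energy; congr (_ + _); rewrite [RHS]big_mkcond /=.
by apply: eq_bigr => u _; rewrite /active; case: ifP; rewrite ?mulr1 ?mulr0.
Qed.

End SeparableEnergy.

Section EnumCover.
Variables (T U : finType) (A : {set T}).

Definition enum_cover (u : U) : option T := onth (enum A) (enum_rank u).

Lemma enum_cover_mem u t : enum_cover u = Some t -> t \in A.
Proof. by move=> h; rewrite -mem_enum; apply/onthP; exists (enum_rank u). Qed.

Lemma enum_cover_inj u v t :
  enum_cover u = Some t -> enum_cover v = Some t -> u = v.
Proof.
move=> hu hv; have u_lt : (enum_rank u < size (enum A))%N.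
  by rewrite -onthTE -/(enum_cover u) hu.
apply/enum_rank_inj/ord_inj; apply: (@onth_inj T (enum A) _ _ (enum_uniq A)).
  by rewrite gtn_min u_lt orbT.
by rewrite -/(enum_cover u) -/(enum_cover v) hu hv.
Qed.

Lemma enum_cover_onto t : (#|A| <= #|U|)%N -> t \in A -> exists u, enum_cover u = Some t.
Proof.
move=> hAU tA; have ht : (index t (enum A) < #|U|)%N.
  by apply: leq_trans hAU; rewrite cardE index_mem mem_enum.
exists (enum_val (Ordinal ht)); rewrite /enum_cover enum_valK onthE.
by rewrite (nth_map t) ?nth_index ?mem_enum // index_mem mem_enum.
Qed.

End EnumCover.

Section Slices.
Variables (R : realType) (n : nat) (dX : 'I_n -> nat) (x0 : forall i, 'I_(dX i)).
Variable ist : 'I_n.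

Definition slice (x : state dX) : state dX :=
  [ffun i => if i == ist then x0 i else x i].

Definition set_at (l : state dX) (k : nat) : state dX :=
  [ffun i => if i == ist then insubd (l i) k else l i].

Definition slice_reps : {set state dX} := [set l | slice l == l].

Definition hamming (x l : state dX) : R := \sum_(i | i != ist) (x i != l i)%:R.

Lemma slice_in x : slice x \in slice_reps.
Proof. by rewrite inE; apply/eqP/ffunP => i; rewrite !ffunE; case: (i == ist). Qed.

Lemma slice_id l : l \in slice_reps -> slice l = l.
Proof. by rewrite inE => /eqP. Qed.

Lemma ref_state_in : ref_state x0 \in slice_reps.
Proof.
by rewrite inE; apply/eqP/ffunP => i; rewrite !ffunE; case: eqP => // ->.
Qed.

Lemma hamming_ge0 x l : 0 <= hamming x l.
Proof. exact: sumr_ge0. Qed.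

Lemma hamming_slice x l : hamming (slice x) l = hamming x l.
Proof. by apply: eq_bigr => i /negbTE hi; rewrite ffunE hi. Qed.

Lemma hamming_slice_self x : hamming x (slice x) = 0.
Proof. by apply: big1 => i /negbTE hi; rewrite ffunE hi eqxx. Qed.

Lemma hamming_ge1 x l : l \in slice_reps -> l != slice x -> 1 <= hamming x l.
Proof.
move=> /slice_id hl /neq_ffun_exists [i].
have [->|i_ist] := eqVneq i ist; first by rewrite -{1}hl !ffunE !eqxx.
rewrite ffunE (negbTE i_ist) eq_sym => hx.
by rewrite /hamming (bigD1 i) //= hx lerDl; apply: sumr_ge0.
Qed.

Lemma set_at_slice x : set_at (slice x) (x ist) = x.
Proof.
apply/ffunP => i; rewrite !ffunE; case: eqP => [->|_] //.
by apply: val_inj; rewrite val_insubd ltn_ord.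
Qed.

Lemma slice_set_at l k : l \in slice_reps -> slice (set_at l k) = l.
Proof.
by move=> /slice_id {2}<-; apply/ffunP => i; rewrite !ffunE; case: (i == ist).
Qed.

Lemma set_at_ist l (a : 'I_(dX ist)) : set_at l a ist = a.
Proof. by apply: val_inj; rewrite ffunE eqxx val_insubd ltn_ord. Qed.

Lemma card_slice_reps : (#|slice_reps| * dX ist <= #|state dX|)%N.
Proof.
pose f (p : {l | l \in slice_reps} * 'I_(dX ist)) := set_at (val p.1) p.2.
have f_inj : injective f.
  move=> [[l1 h1] a1] [[l2 h2] a2]; rewrite /f /= => e.
  have ea : a1 = a2 by rewrite -(set_at_ist l1 a1) e set_at_ist.
  subst a2; congr (_, _); apply: val_inj => /=.
  by rewrite -(slice_set_at a1 h1) e slice_set_at.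
by have := leq_card f f_inj; rewrite card_prod card_sig card_ord.
Qed.

End Slices.

Lemma ler_sum_nonpos_but (R : realDomainType) (I : finType) (P : pred I) (F : I -> R)
    j c U :
  P j -> 0 <= U -> F c <= U -> (forall i, P i -> i != c -> F i <= 0) ->
  \sum_(i | P i) F i <= F j + U.
Proof.
move=> Pj U_ge0 Fc_le F_le0; rewrite (bigD1 j) //= lerD2l.
apply: (@le_trans _ _ (\sum_(i | P i && (i != j)) (if i == c then U else 0))).
  by apply: ler_sum => i /andP[Pi _]; case: eqP => [->|/eqP]; last exact: F_le0.
rewrite big_mkcond /= (@le_trans _ _ (\sum_i if i == c then U else 0)) //.
  by apply: ler_sum => i; case: ifP => _ //; case: ifP.
by rewrite -big_mkcond big_pred1_eq.
Qed.

Lemma sum_expR_peak (R : realType) (I : finType) (F : I -> R) j K :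
  (forall i, i != j -> F i <= K) ->
  expR (F j) <= \sum_i expR (F i) <= expR (F j) + #|I|%:R * expR K.
Proof.
move=> F_le; rewrite (bigD1 j) //=; apply/andP; split.
  by rewrite lerDl sumr_ge0 // => i _; rewrite ltW ?expR_gt0.
rewrite lerD2l; apply: (@le_trans _ _ (\sum_(i | i != j) expR K)).
  by apply: ler_sum => i /F_le; rewrite ler_expR.
apply: (@le_trans _ _ (\sum_i expR K)); last by rewrite sumr_const mulr_natl.
by rewrite [leRHS](bigD1 j) //= lerDr ltW ?expR_gt0.
Qed.

Section Construction.
Variables (R : realType) (n m : nat) (dX : 'I_n -> nat) (dY : 'I_m -> nat).
Variables (x0 : forall i, 'I_(dX i)) (y0 : forall j, 'I_(dY j)) (ist : 'I_n).
Variables (L : state dX -> R) (T : R).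
Implicit Types (x l : state dX) (u : nonref_state y0).

Local Notation l0 := (ref_state x0).
Local Notation slice := (slice x0 ist).
Local Notation set_at := (set_at ist).
Local Notation hamming := (hamming R ist).

(* The value of coordinate [ist] is passed to [f] as a [nat], which avoids
   casting between ['I_(dX i)] and ['I_(dX ist)] when [i = ist]. *)
Definition slice_col (f : nat -> R) (l : state dX) (P : R) : forall i, 'I_(dX i) -> R :=
  fun i a => if i == ist then f a else P * (a != l i)%:R.
Arguments slice_col : clear implicits.

Lemma sum_slice_col f l P x :
  \sum_i slice_col f l P i (x i) = f (x ist) + P * hamming x l.
Proof.
rewrite (bigD1 ist) //= /slice_col eqxx mulr_sumr; congr (_ + _).
by apply: eq_bigr => i /negbTE ->.
Qed.

Definition slice_unit (u : nonref_state y0) : option (state dX) :=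
  enum_cover (slice_reps x0 ist :\ l0) u.

(* Column [None] alone gives energy [L] on the reference slice and penalises
   the Hamming distance to it; the unit assigned to a slice [l] corrects this
   to [L] on [l] and costs at least [T] on every other slice; unassigned units
   always cost [T]. *)
Definition rbm_col (b : feat_idx y0) : forall i, 'I_(dX i) -> R :=
  match b with
  | None => slice_col (fun k => L (set_at l0 k)) l0 (- T)
  | Some u =>
    if slice_unit u is Some l then
      slice_col (fun k => L (set_at l k) - L (set_at l0 k) + T * hamming l l0) l
                (- ((hamming l l0 + 1) * T))
    else slice_col (fun=> - T) l0 0
  end.
Arguments rbm_col : clear implicits.

Definition rbm_theta : feat_idx x0 -> feat_idx y0 -> R := sep_theta rbm_col.

Local Notation S := (col_energy rbm_col).
Local Notation E := (sep_energy rbm_col).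

Lemma col_energy_None x : S None x = L (set_at l0 (x ist)) - T * hamming x l0.
Proof. by rewrite /col_energy sum_slice_col mulNr. Qed.

Lemma col_energy_unit u l x : slice_unit u = Some l ->
  S (Some u) x = L (set_at l (x ist)) - L (set_at l0 (x ist)) + T * hamming l l0
                 - (hamming l l0 + 1) * T * hamming x l.
Proof. by move=> hu; rewrite /col_energy /= hu sum_slice_col mulNr. Qed.

Lemma col_energy_free u x : slice_unit u = None -> S (Some u) x = - T.
Proof. by move=> hu; rewrite /col_energy /= hu sum_slice_col mul0r addr0. Qed.

Lemma col_energy_own u x : slice_unit u = Some (slice x) -> S None x + S (Some u) x = L x.
Proof.
move=> hu; rewrite col_energy_None (col_energy_unit _ hu) hamming_slice_self.
by rewrite hamming_slice set_at_slice; ring.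
Qed.

Variable B0 : R.
Hypothesis L_le : forall x, `|L x| <= B0.
Hypothesis T_ge : 2 * B0 <= T.

Lemma L_bounds x : - B0 <= L x <= B0.
Proof. by rewrite -ler_norml. Qed.

Lemma B0_ge0 : 0 <= B0.
Proof. exact: le_trans (normr_ge0 _) (L_le l0). Qed.

Lemma col_energy_None_le x : S None x <= B0 - T * hamming x l0.
Proof. by rewrite col_energy_None lerD2r; case/andP: (L_bounds (set_at l0 (x ist))). Qed.

Lemma col_energy_Some_le u x : slice_unit u != Some (slice x) -> S (Some u) x <= 2 * B0 - T.
Proof.
have hB := B0_ge0; have hT := T_ge.
case hu: (slice_unit u) => [l|] hl; last by rewrite col_energy_free //; lra.
have l_in : l \in slice_reps x0 ist.
  by move: (enum_cover_mem hu); rewrite in_setD1 => /andP[].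
have hx : 1 <= hamming x l.
  by apply: (hamming_ge1 R l_in); apply: contra hl => /eqP ->.
have hl0 := hamming_ge0 R ist l l0.
have /andP[_ L1] := L_bounds (set_at l (x ist)).
have /andP[L2 _] := L_bounds (set_at l0 (x ist)).
have : 0 <= (hamming l l0 + 1) * T * (hamming x l - 1).
  by apply: mulr_ge0; [apply: mulr_ge0 | ]; lra.
rewrite (col_energy_unit _ hu); lra.
Qed.

Lemma energy_ref_slice x : slice x = l0 -> E x (ref_state y0) = L x.
Proof.
move=> hx; rewrite /sep_energy big_pred0 => [|u]; last by rewrite active_ref_state.
by rewrite addr0 col_energy_None -hx hamming_slice_self mulr0 subr0 set_at_slice.
Qed.

Lemma energy_ref_slice_le x y : slice x = l0 -> y != ref_state y0 -> E x y <= 3 * B0 - T.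
Proof.
move=> hx /exists_active[v hv]; have hB := B0_ge0; have hT := T_ge.
have unit_le u : S (Some u) x <= 2 * B0 - T.
  apply: col_energy_Some_le; apply/negP => /eqP /enum_cover_mem.
  by rewrite hx in_setD1 eqxx.
have unit_le0 u : S (Some u) x <= 0 by have := unit_le u; lra.
have := ler_sum_nonpos_but (P := active y) (F := fun u => S (Some u) x) hv (lexx 0)
  (unit_le0 v) (fun u _ _ => unit_le0 u).
have := col_energy_None_le x; rewrite -hx hamming_slice_self mulr0 subr0.
by rewrite /sep_energy; have := unit_le v; lra.
Qed.

Lemma energy_unit_slice x c : slice_unit c = Some (slice x) -> E x (unit_state c) = L x.
Proof.
move=> hc; rewrite /sep_energy (eq_bigl (pred1 c)) ?big_pred1_eq ?col_energy_own // => u.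
by rewrite active_unit_state.
Qed.

Lemma energy_unit_slice_le x c y : slice x != l0 -> slice_unit c = Some (slice x) ->
  y != unit_state c -> E x y <= 5 * B0 - T.
Proof.
move=> hx hc hy; have hB := B0_ge0; have hT := T_ge.
have h_ge1 : 1 <= hamming x l0.
  by apply: (hamming_ge1 R (ref_state_in x0 ist)); rewrite eq_sym.
have hT1 : 0 <= T * (hamming x l0 - 1) by apply: mulr_ge0; lra.
have None_le := col_energy_None_le x.
have own_le : S (Some c) x <= 2 * B0 + T * hamming x l0.
  have := col_energy_own hc; rewrite col_energy_None.
  by have /andP[_ ?] := L_bounds x; have /andP[? _] := L_bounds (set_at l0 (x ist)); lra.
have other_le u : u != c -> S (Some u) x <= 2 * B0 - T.
  move=> hu; apply: col_energy_Some_le; apply: contra hu => /eqP hu'.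
  by apply/eqP; apply: enum_cover_inj hu' hc.
rewrite /sep_energy; have [->|/exists_active_neq] := eqVneq y (ref_state y0).
  by rewrite big_pred0 => [|u]; [lra | rewrite active_ref_state].
move=> /(_ c hy) [v hv vc].
have U_ge0 : 0 <= 2 * B0 + T * hamming x l0 by lra.
have other_le0 u : active y u -> u != c -> S (Some u) x <= 0.
  by move=> _ /other_le; lra.
have := ler_sum_nonpos_but (F := fun u => S (Some u) x) hv U_ge0 own_le other_le0.
by have := other_le v vc; lra.
Qed.

Hypothesis slices_covered : (#|slice_reps x0 ist :\ l0| <= #|nonref_state y0|)%N.

Lemma energy_peak x :
  exists yg, E x yg = L x /\ forall y, y != yg -> E x y <= 5 * B0 - T.
Proof.
have [hx|hx] := eqVneq (slice x) l0.
  exists (ref_state y0); split; first exact: energy_ref_slice.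
  by move=> y /(energy_ref_slice_le hx); have := B0_ge0; lra.
have [c hc] : exists c, slice_unit c = Some (slice x).
  by apply: enum_cover_onto slices_covered _; rewrite in_setD1 hx slice_in.
exists (unit_state c); split; first exact: energy_unit_slice.
by move=> y; exact: energy_unit_slice_le.
Qed.

Lemma rbm_weight_bounds x :
  expR (L x) <= rbm_weight rbm_theta x
             <= expR (L x) + #|state dY|%:R * expR (5 * B0 - T).
Proof.
have [yg [<- yg_peak]] := energy_peak x.
by rewrite rbm_weight_sep_theta; apply: sum_expR_peak.
Qed.

End Construction.

Section Distributions.
Variables (R : realType) (I : finType).
Implicit Types p q w : I -> R.

Lemma distribution_le1 p i : is_distribution p -> p i <= 1.
Proof. by case=> p_ge0 <-; rewrite (bigD1 i) //= lerDl sumr_ge0. Qed.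

Lemma distribution_card_gt0 p : is_distribution p -> (0 < #|I|)%N.
Proof.
case=> _; rewrite lt0n; apply: contra_eqN => /eqP/card0_eq I0.
by rewrite big_pred0 // eq_sym oner_eq0.
Qed.

Lemma distribution_subsingleton p i : (forall j, j = i) -> is_distribution p -> p i = 1.
Proof.
move=> single [_ <-]; rewrite (bigD1 i) //= big_pred0 ?addr0 // => j.
by rewrite (single j) eqxx.
Qed.

Definition mix_uniform p c i : R := (1 - c) * p i + c / #|I|%:R.

Section MixUniform.
Variables (p : I -> R) (c : R).
Hypotheses (p_distr : is_distribution p) (c_gt0 : 0 < c) (c_le1 : c <= 1).

Lemma cardR_gt0 : 0 < #|I|%:R :> R.
Proof. by rewrite ltr0n (distribution_card_gt0 p_distr). Qed.

Lemma mix_uniform_gt0 i : 0 < mix_uniform p c i.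
Proof.
have [p_ge0 _] := p_distr.
apply: ltr_wpDl; first by rewrite mulr_ge0 // subr_ge0.
by rewrite divr_gt0 // cardR_gt0.
Qed.

Lemma sum_mix_uniform : \sum_i mix_uniform p c i = 1.
Proof.
have [_ p1] := p_distr; have N_gt0 := cardR_gt0.
rewrite big_split /= -mulr_sumr p1 mulr1 sumr_const (_ : #|xpredT| = #|I|) //.
by rewrite -[_ *+ #|I|]mulr_natr divfK ?subrK // gt_eqF.
Qed.

Lemma dist_mix_uniform i : `|p i - mix_uniform p c i| <= c.
Proof.
have N_gt0 := cardR_gt0; have [p_ge0 _] := p_distr.
have pi_ge0 := p_ge0 i; have pi_le1 := distribution_le1 i p_distr.
have hc := c_gt0.
have N_ge1 : 1 <= #|I|%:R :> R by rewrite ler1n (distribution_card_gt0 p_distr).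
have inv_ge0 : 0 <= 1 / #|I|%:R :> R by rewrite divr_ge0 ?ltW.
have inv_le1 : 1 / #|I|%:R <= 1 :> R by rewrite ler_pdivrMr // mul1r.
have -> : p i - mix_uniform p c i = c * (p i - 1 / #|I|%:R).
  by rewrite /mix_uniform; ring.
rewrite normrM gtr0_norm // -[leRHS]mulr1 ler_pM2l // ler_norml.
by apply/andP; split; lra.
Qed.

End MixUniform.

Lemma normalize_close q w eta :
  (forall i, 0 <= q i) -> \sum_i q i = 1 -> (forall i, q i <= w i <= q i + eta) ->
  forall i, `|q i - w i / \sum_j w j| <= #|I|.+1%:R * eta.
Proof.
move=> q_ge0 q1 w_bnd i.
set W := \sum_j w j; set N : R := #|I|%:R.
have w_ge0 j : 0 <= w j by case/andP: (w_bnd j) => /(le_trans (q_ge0 j)).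
have W_ge1 : 1 <= W by rewrite -q1; apply: ler_sum => j _; case/andP: (w_bnd j).
have W_le : W <= 1 + N * eta.
  have : W <= \sum_j (q j + eta) by apply: ler_sum => j _; case/andP: (w_bnd j).
  by rewrite big_split /= q1 sumr_const -mulr_natl.
have eta_ge0 : 0 <= eta by case/andP: (w_bnd i) => h1 h2; lra.
have wi_le : w i <= W by rewrite /W (bigD1 i) //= lerDl sumr_ge0.
have W_gt0 : 0 < W by lra.
set r := w i / W.
have rW : r * W = w i by rewrite /r divfK // gt_eqF.
have r_ge0 : 0 <= r by rewrite divr_ge0 // ltW.
have r_le1 : r <= 1 by rewrite ler_pdivrMr // mul1r.
have r_le : r <= w i by rewrite ler_pdivrMr // ler_peMr.
have N_ge0 : 0 <= N by rewrite ler0n.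
have : r * W <= r * (1 + N * eta) by rewrite ler_wpM2l.
rewrite rW mulrDr mulr1 => wi_le'.
have : r * (N * eta) <= N * eta by rewrite ler_piMl // mulr_ge0.
case/andP: (w_bnd i) => h1 h2; rewrite -natr1 -/N ler_norml => rN_le.
by apply/andP; split; lra.
Qed.

End Distributions.

Section RBMApproximation.
Variables (R : realType) (n m : nat) (dX : 'I_n -> nat) (dY : 'I_m -> nat).
Variables (x0 : forall i, 'I_(dX i)) (y0 : forall j, 'I_(dY j)).
Implicit Type Theta : feat_idx x0 -> feat_idx y0 -> R.

Lemma rbm_weight_gt0 Theta x : 0 < rbm_weight Theta x.
Proof.
rewrite /rbm_weight (bigD1 (ref_state y0)) //=; apply: ltr_pwDl; first exact: expR_gt0.
by apply: sumr_ge0 => y _; apply/ltW/expR_gt0.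
Qed.

Lemma rbm_distribution Theta : is_distribution (rbm Theta).
Proof.
have W_gt0 : 0 < \sum_x rbm_weight Theta x.
  rewrite (bigD1 (ref_state x0)) //=; apply: ltr_pwDl; first exact: rbm_weight_gt0.
  by apply: sumr_ge0 => x _; apply/ltW/rbm_weight_gt0.
split=> [x|]; first by rewrite divr_ge0 ?ltW ?rbm_weight_gt0.
by rewrite -mulr_suml divff // gt_eqF.
Qed.

Lemma slices_covered_of_card ist :
  (#|state dX|%:R / (dX ist)%:R <= (1 + \sum_(j < m) (dY j - 1))%N%:R :> R) ->
  (#|slice_reps x0 ist :\ ref_state x0| <= #|nonref_state y0|)%N.
Proof.
move=> hcond; have dX_gt0 : (0 < dX ist)%N := leq_ltn_trans (leq0n _) (ltn_ord (x0 ist)).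
have : (#|slice_reps x0 ist| <= 1 + \sum_j (dY j - 1))%N.
  rewrite -(ler_nat R); apply: le_trans hcond.
  by rewrite ler_pdivlMr ?ltr0n // -natrM ler_nat card_slice_reps.
by rewrite (cardsD1 (ref_state x0)) ref_state_in card_nonref_state leq_add2l.
Qed.

Lemma rbm_approx_positive ist (q : state dX -> R) delta :
  (#|slice_reps x0 ist :\ ref_state x0| <= #|nonref_state y0|)%N ->
  (forall x, 0 < q x) -> \sum_x q x = 1 -> 0 < delta ->
  exists Theta, forall x, `|q x - rbm Theta x| <= delta.
Proof.
move=> covered q_gt0 q1 delta_gt0.
pose L x := ln (q x); pose B0 := \sum_x `|L x|.
have L_le x : `|L x| <= B0 by rewrite /B0 (bigD1 x) //= lerDl sumr_ge0.
have B0_ge0 : 0 <= B0 by rewrite sumr_ge0.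
pose NY : R := #|state dY|%:R.
have NY_gt0 : 0 < NY by rewrite ltr0n; apply/card_gt0P; exists (ref_state y0).
pose eta := delta / #|state dX|.+1%:R.
have eta_gt0 : 0 < eta by rewrite divr_gt0 // ltr0n.
pose T := 5 * B0 + `|ln (eta / NY)|.
have T_ge : 2 * B0 <= T by rewrite /T; have := normr_ge0 (ln (eta / NY)); lra.
have tail_le : NY * expR (5 * B0 - T) <= eta.
  have ratio_gt0 : 0 < eta / NY by rewrite divr_gt0.
  rewrite mulrC -ler_pdivlMr // -[leRHS](lnK ratio_gt0) ler_expR.
  by have := ler_norm (- ln (eta / NY)); rewrite normrN /T; lra.
pose Theta := rbm_theta (x0 := x0) (y0 := y0) ist L T.
have w_bnd y : q y <= rbm_weight Theta y <= q y + eta.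
  have := rbm_weight_bounds L_le T_ge covered y; rewrite lnK ?posrE //.
  by case/andP => h1 h2; apply/andP; split; lra.
exists Theta => x.
have := normalize_close (fun y => ltW (q_gt0 y)) q1 w_bnd x.
by rewrite [_ * eta]mulrC /eta divfK // gt_eqF // ltr0n.
Qed.

End RBMApproximation.

Unset Implicit Arguments.
Set Strict Implicit.

Theorem corollary2 (R : realType) (n m : nat)
  (dX : 'I_n -> nat) (dY : 'I_m -> nat)
  (x0 : forall i : 'I_n, 'I_(dX i)) (y0 : forall j : 'I_m, 'I_(dY j)) :
  (#|state dX|%:R / (\max_(i < n) dX i)%:R
     <= (1 + \sum_(j < m) (dY j - 1))%N%:R :> R) ->
  forall p : state dX -> R, is_distribution p ->
  forall eps : R, 0 < eps ->
  exists Theta : feat_idx x0 -> feat_idx y0 -> R,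
    forall x : state dX, `|p x - rbm Theta x| < eps.
Proof.
move=> hcond p p_distr eps eps_gt0.
have [n0 | n_gt0] := posnP n.
  subst n; exists (fun _ _ => 0) => x.
  have single (y : state dX) : y = x by apply/ffunP => -[].
  rewrite (distribution_subsingleton single p_distr).
  by rewrite (distribution_subsingleton single (rbm_distribution _)) subrr normr0.
have card_gt0 : (0 < #|'I_n|)%N by rewrite card_ord.
have [ist ist_max] := bigop.eq_bigmax dX card_gt0.
rewrite ist_max in hcond.
pose c := eps / (eps + 2).
have c_gt0 : 0 < c by rewrite divr_gt0 //; lra.
have c_le1 : c <= 1 by rewrite ler_pdivrMr; lra.
have c_lt : c < eps / 2.
  have : c * (eps + 2) = eps by rewrite divfK // gt_eqF //; lra.
  by have := mulr_gt0 c_gt0 eps_gt0; lra.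
have [Theta Theta_close] := rbm_approx_positive (slices_covered_of_card x0 y0 hcond)
  (mix_uniform_gt0 p_distr c_gt0 c_le1) (sum_mix_uniform c p_distr)
  (divr_gt0 eps_gt0 (ltr0Sn _ 1)).
exists Theta => x.
have := ler_distD (mix_uniform p c x) (p x) (rbm Theta x).
have := dist_mix_uniform p_distr c_gt0 x; have := Theta_close x.
lra.
Qed.
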